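(* Let $X$ be a real Hilbert space, let $A\colon X\rightrightarrows X$ with $\operatorname{dom}A\ne\varnothing$, let $\rho\in\,]-1,+\infty[$, set $D=\operatorname{ran}(\mathrm{Id}+A)$, $T=J_A$ (i.e., $A=T^{-1}-\mathrm{Id}$), and $\alpha=\tfrac{1}{2(\rho+1)}$. Then: (i) $A$ is $\rho$-comonotone $\iff$ $T$ is $\tfrac{1}{2(\rho+1)}$-conically nonexpansive. (ii) $A$ is maximally $\rho$-comonotone $\iff$ [$T$ is $\alpha$-conically nonexpansive and $D=X$]. (iii) $A$ is $(-\tfrac12)$-comonotone $\iff$ $T$ is nonexpansive. (iv) $A$ is maximally $(-\tfrac12)$-comonotone $\iff$ [$T$ is nonexpansive and $D=X$]. (v) [$A$ is $\rho$-comonotone and $\rho>-\tfrac12$] $\iff$ $T$ is $\alpha$-averaged. (vi) [$A$ is maximally $\rho$-comonotone and $\rho>-\tfrac12$] $\iff$ [$T$ is $\alpha$-averaged and $D=X$].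
   Context: $J_A=(\mathrm{Id}+A)^{-1}$ with domain $D$. An operator $N$ with domain $D$ is nonexpansive if it is single-valued and $\|Nx-Ny\|\le\|x-y\|$ for all $x,y\in D$. For $\alpha>0$, $T$ is $\alpha$-conically nonexpansive if $T=(1-\alpha)\mathrm{Id}+\alpha N$ for some nonexpansive $N\colon D\to X$; $T$ is $\alpha$-averaged if this holds with $\alpha\in]0,1[$. For $\rho\in\mathbb R$, $A$ is $\rho$-comonotone if $\langle x-y,u-v\rangle\ge\rho\|u-v\|^2$ for all $(x,u),(y,v)\in\operatorname{gra}A$; maximally $\rho$-comonotone if moreover no $\rho$-comonotone operator has a graph properly containing $\operatorname{gra}A$. *)

From HB Require Import structures.
From mathcomp Require Import all_boot all_order all_algebra.
From mathcomp Require Import all_classical all_reals all_analysis.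
Set Implicit Arguments. Unset Strict Implicit. Unset Printing Implicit Defensive.
Import Order.TTheory GRing.Theory Num.Theory.
Import numFieldNormedType.Exports.
Local Open Scope classical_set_scope.
Local Open Scope ring_scope.

Section Defs.
Variables (R : realType) (X : normedModType R).

(* [inner] is an inner product inducing the norm of X (so a complete X is a
   real Hilbert space). *)
Definition is_inner_product (inner : X -> X -> R) : Prop :=
  [/\ (forall x y, inner x y = inner y x),
      (forall (a : R) x y z, inner (a *: x + y) z = a * inner x z + inner y z)
    & (forall x, inner x x = `|x| ^+ 2)].

Definition dom (A : X -> set X) : set X := [set x | exists u, A x u].
Definition ran (A : X -> set X) : set X := [set u | exists x, A x u].

Definition id_plus (A : X -> set X) : X -> set X :=
  fun x => [set x + u | u in A x].

Definition inv_op (B : X -> set X) : X -> set X := fun y => [set x | B x y].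

Definition resolvent (A : X -> set X) : X -> set X := inv_op (id_plus A).

Definition comonotone (inner : X -> X -> R) (rho : R) (A : X -> set X) : Prop :=
  forall x u y v, A x u -> A y v -> rho * `|u - v| ^+ 2 <= inner (x - y) (u - v).

Definition max_comonotone (inner : X -> X -> R) (rho : R) (A : X -> set X) : Prop :=
  comonotone inner rho A /\
  forall B : X -> set X, comonotone inner rho B ->
    (forall x u, A x u -> B x u) -> (forall x u, B x u -> A x u).

Definition nonexpansive_on (D : set X) (N : X -> X) : Prop :=
  forall x y, D x -> D y -> `|N x - N y| <= `|x - y|.

Definition nonexpansive_op (D : set X) (T : X -> set X) : Prop :=
  exists N : X -> X, nonexpansive_on D N /\
    (forall x, D x -> T x = [set N x]) /\ (forall x, ~ D x -> T x = set0).

Definition conically_nonexpansive (alpha : R) (D : set X) (T : X -> set X) : Prop :=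
  0 < alpha /\
  exists N : X -> X, nonexpansive_on D N /\
    (forall x, D x -> T x = [set (1 - alpha) *: x + alpha *: N x]) /\
    (forall x, ~ D x -> T x = set0).

Definition averaged (alpha : R) (D : set X) (T : X -> set X) : Prop :=
  0 < alpha < 1 /\ conically_nonexpansive alpha D T.

End Defs.

(* Writing z = x + u with A x u, the resolvent is single valued on
   ran (Id + A) when rho > -1, and T = (1 - alpha) Id + alpha N forces
   N z = x - (2 rho + 1) u.  Since
     |a - (2 rho + 1) b|^2 - |a + b|^2 = 4 (rho + 1) (rho |b|^2 - <a, b>),
   N is nonexpansive exactly when A is rho-comonotone.  Maximality is
   equivalent to ran (Id + A) = X: if the range is everything, Id + A is
   injective on any comonotone extension; conversely, for fixed z the operator
   {((1 + rho) u, x - rho u - z) | A x u} is maximally monotone, and Minty's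
   theorem yields a point of it of the form (a, - a), i.e. z = x + u.  Minty's
   theorem is proved as by Simons and Zalinescu: the Fitzpatrick function of a
   maximally monotone G plus (|x|^2 + |u|^2) / 2 is strongly convex and bounded
   below, its minimiser (x, u) exists by completeness, and the optimality
   condition shows that (-u, -x) is monotonically related to G, whence
   u = - x and G x (- x). *)

From HB Require Import structures.
From mathcomp Require Import all_boot all_order all_algebra.
From mathcomp Require Import all_classical all_reals all_analysis.
From mathcomp Require Import ring lra.
Import Order.TTheory GRing.Theory Num.Theory.
Import numFieldNormedType.Exports.
Local Open Scope classical_set_scope.
Local Open Scope ring_scope.
Set Implicit Arguments. Unset Strict Implicit.

Section InnerProduct.
Variables (R : realType) (X : normedModType R) (ip : X -> X -> R).
Hypothesis hip : is_inner_product ip.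

Lemma ipC x y : ip x y = ip y x. Proof. by case: hip. Qed.

Lemma ipxx x : ip x x = `|x| ^+ 2. Proof. by case: hip. Qed.

Lemma ip0l z : ip 0 z = 0.
Proof.
case: hip => _ lin _; have := lin 1 0 0 z.
by rewrite scaler0 addr0 mul1r => h; apply: (addrI (ip 0 z)); rewrite addr0 -h.
Qed.

Lemma ipDl x y z : ip (x + y) z = ip x z + ip y z.
Proof. by case: hip => _ lin _; have := lin 1 x y z; rewrite scale1r mul1r. Qed.

Lemma ipZl a x z : ip (a *: x) z = a * ip x z.
Proof. by case: hip => _ lin _; have := lin a x 0 z; rewrite !addr0 ip0l addr0. Qed.

Lemma ipNl x z : ip (- x) z = - ip x z.
Proof. by rewrite -scaleN1r ipZl mulN1r. Qed.

Lemma ipBl x y z : ip (x - y) z = ip x z - ip y z.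
Proof. by rewrite ipDl ipNl. Qed.

Lemma ip0r z : ip z 0 = 0. Proof. by rewrite ipC ip0l. Qed.

Lemma ipDr x y z : ip z (x + y) = ip z x + ip z y.
Proof. by rewrite ipC ipDl !(ipC z). Qed.

Lemma ipZr a x z : ip z (a *: x) = a * ip z x.
Proof. by rewrite ipC ipZl ipC. Qed.

Lemma ipNr x z : ip z (- x) = - ip z x.
Proof. by rewrite ipC ipNl ipC. Qed.

Lemma ipBr x y z : ip z (x - y) = ip z x - ip z y.
Proof. by rewrite ipDr ipNr. Qed.

Definition ipE := (ipDl, ipDr, ipBl, ipBr, ipNl, ipNr, ipZl, ipZr, ip0l, ip0r).

Lemma cvg_norm_sqr (f : nat -> X) a : f @ \oo --> a ->
  (fun n => `|f n| ^+ 2) @ \oo --> `|a| ^+ 2.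
Proof.
move=> /(cvg_norm (FF := eventually_filter)) fa.
by rewrite expr2; under eq_fun do rewrite expr2; exact: cvgM.
Qed.

Lemma ip_polarization x y : ip x y = (`|x + y| ^+ 2 - `|x| ^+ 2 - `|y| ^+ 2) / 2.
Proof. by rewrite -!ipxx !ipE (ipC y x); field. Qed.

Lemma ip_subr_eq0 v w : ip (v - w) (v - w) = 0 -> v = w.
Proof. by rewrite ipxx => /eqP; rewrite sqrf_eq0 normr_eq0 subr_eq0 => /eqP. Qed.

Lemma cvg_ip (xs ys : nat -> X) x y : xs @ \oo --> x -> ys @ \oo --> y ->
  (fun n => ip (xs n) (ys n)) @ \oo --> ip x y.
Proof.
move=> xsx ysy; rewrite ip_polarization; under eq_fun do rewrite ip_polarization.
apply: cvgMr_tmp; apply: cvgB; first apply: cvgB.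
- by apply: cvg_norm_sqr; exact: cvgD.
- exact: cvg_norm_sqr.
- exact: cvg_norm_sqr.
Qed.

End InnerProduct.

(* [ring] treats [ip a b] and [ip b a] as unrelated atoms, hence the
   normalisation of symmetric pairs. *)
Ltac ip_normalize :=
  match goal with hip : is_inner_product ?ip |- _ =>
    rewrite ?(ipE hip);
    repeat match goal with |- context [ip ?a ?b] =>
      match goal with |- context [ip b a] =>
        assert_fails (constr_eq a b); rewrite ((ipC hip) b a) end end
  end.

(* Vector identities are reduced to [ip (v - w) (v - w) = 0], which [ring]
   can check after expansion. *)
Ltac vec_ring :=
  match goal with hip : is_inner_product _ |- _ = _ =>
    apply: (ip_subr_eq0 hip); ip_normalize end.

Lemma affine_ge0_at0 (R : realFieldType) (K Q : R) :
  (forall t, 0 < t -> t <= 1 -> 0 <= K + t * Q) -> 0 <= K.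
Proof.
move=> h; rewrite leNgt; apply/negP => K_lt0.
have := h 1 ltr01 (lexx 1); rewrite mul1r => KQ.
have Q_gt0 : 0 < Q by lra.
have t_gt0 : 0 < - K / (2 * Q) by apply: divr_gt0; lra.
have t_le1 : - K / (2 * Q) <= 1 by rewrite ler_pdivrMr; lra.
have := h _ t_gt0 t_le1.
have -> : - K / (2 * Q) * Q = - K / 2 by field; rewrite gt_eqF.
lra.
Qed.

Lemma harmonic_cauchy_cvg (R : realType) (X : completeNormedModType R)
    (c : R) (xs : nat -> X) :
  (forall n k, `|xs n - xs k| ^+ 2 <= c * (n.+1%:R^-1 + k.+1%:R^-1)) ->
  cvgn xs.
Proof.
move=> hxs; apply/cauchy_cvgP/cauchy_ballP => e e_gt0; rewrite near_map2.
set d := e ^+ 2 / (2 * (`|c| + 1)).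
have c1_gt0 : 0 < `|c| + 1 by rewrite ltr_wpDl.
have d_gt0 : 0 < d by rewrite divr_gt0 ?exprn_gt0 ?mulr_gt0.
have e2 : e ^+ 2 = 2 * d * (`|c| + 1) by rewrite /d; field; rewrite gt_eqF.
have small := near_infty_natSinv_lt (PosNum d_gt0).
near=> n k; rewrite -ball_normE /=.
have hn : n.+1%:R^-1 < d by near: n; exact: small.
have hk : k.+1%:R^-1 < d by near: k; exact: small.
move: hn hk (hxs n k); set a := n.+1%:R^-1; set b := k.+1%:R^-1 => hn hk.
have a_gt0 : 0 < a by rewrite invr_gt0.
have b_gt0 : 0 < b by rewrite invr_gt0.
have c_le : c * (a + b) <= `|c| * (a + b) by rewrite ler_wpM2r ?ler_norm //; lra.
have c_lt : `|c| * (a + b) <= `|c| * (2 * d) by rewrite ler_wpM2l //; lra.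
have := normr_ge0 (xs n - xs k); nra.
Unshelve. all: by end_near.
Qed.

Section Fitzpatrick.
Variables (R : realType) (X : normedModType R) (ip : X -> X -> R).
Hypothesis hip : is_inner_product ip.
Variable G : X -> set X.
Hypothesis G_mono : forall a b a' b', G a b -> G a' b' -> 0 <= ip (a - a') (b - b').
Hypothesis G_max :
  forall c d, (forall a b, G a b -> 0 <= ip (c - a) (d - b)) -> G c d.

Definition fitz_term (y v x u : X) : R :=
  ip x v + ip y u - ip y v + (`|x| ^+ 2 + `|u| ^+ 2) / 2.

(* [fitz_le c x u] says that the Fitzpatrick function of [G], plus
   [(|x|^2 + |u|^2) / 2], is at most [c] at [(x, u)]; phrasing it as a bound
   avoids the supremum in the extended reals. *)
Definition fitz_le (c : R) (x u : X) : Prop :=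
  forall y v, G y v -> fitz_term y v x u <= c.

Definition fitz_inf : R := inf [set c | exists x u, fitz_le c x u].

Lemma fitz_termE y v x u :
  fitz_term y v x u = ip x u + (`|x| ^+ 2 + `|u| ^+ 2) / 2 - ip (x - y) (u - v).
Proof. by rewrite /fitz_term; ip_normalize; ring. Qed.

Lemma fitz_term_convex t y v x1 u1 x2 u2 :
  fitz_term y v ((1 - t) *: x1 + t *: x2) ((1 - t) *: u1 + t *: u2) =
  (1 - t) * fitz_term y v x1 u1 + t * fitz_term y v x2 u2
  - t * (1 - t) * (`|x1 - x2| ^+ 2 + `|u1 - u2| ^+ 2) / 2.
Proof. by rewrite /fitz_term -!(ipxx hip); ip_normalize; ring. Qed.

Lemma fitz_le_convex t c1 c2 x1 u1 x2 u2 : 0 <= t <= 1 ->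
  fitz_le c1 x1 u1 -> fitz_le c2 x2 u2 ->
  fitz_le ((1 - t) * c1 + t * c2
           - t * (1 - t) * (`|x1 - x2| ^+ 2 + `|u1 - u2| ^+ 2) / 2)
    ((1 - t) *: x1 + t *: x2) ((1 - t) *: u1 + t *: u2).
Proof.
move=> /andP[t_ge0 t_le1] h1 h2 y v Gyv; rewrite fitz_term_convex.
have := ler_wpM2l t_ge0 (h2 y v Gyv).
have := ler_wpM2l (_ : 0 <= 1 - t) (h1 y v Gyv); rewrite subr_ge0 => /(_ t_le1).
lra.
Qed.

Lemma fitz_le_graph y v :
  G y v -> fitz_le (ip y v + (`|y| ^+ 2 + `|v| ^+ 2) / 2) y v.
Proof. by move=> Gyv y' v' Gy'v'; rewrite fitz_termE; have := G_mono Gyv Gy'v'; lra. Qed.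

Lemma fitz_le_ge c x u :
  fitz_le c x u -> ip x u + (`|x| ^+ 2 + `|u| ^+ 2) / 2 <= c.
Proof.
move=> hc.
have [y [v [Gyv le0]]] : exists y v, G y v /\ ip (x - y) (u - v) <= 0.
  apply: contrapT => none; apply: (none); exists x, u; rewrite subrr (ip0l hip); split => //.
  apply: G_max => a b Gab; rewrite leNgt; apply/negP => /ltW neg.
  by apply: (none); exists a, b.
by have := hc y v Gyv; rewrite fitz_termE; lra.
Qed.

Lemma fitz_le_ge0 c x u : fitz_le c x u -> 0 <= c.
Proof.
move=> /fitz_le_ge; have := sqr_ge0 `|x + u|.
by rewrite -!(ipxx hip); ip_normalize; lra.
Qed.

Lemma graph_nonempty : exists a b, G a b.
Proof.
apply: contrapT => none; apply: (none); exists 0, 0; apply: G_max => a b Gab.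
by exfalso; apply: (none); exists a, b.
Qed.

Lemma fitz_has_inf : has_inf [set c | exists x u, fitz_le c x u].
Proof.
split; last by exists 0 => c [x [u /fitz_le_ge0]].
have [a [b Gab]] := graph_nonempty.
by exists (ip a b + (`|a| ^+ 2 + `|b| ^+ 2) / 2), a, b; exact: fitz_le_graph.
Qed.

Lemma fitz_inf_le c x u : fitz_le c x u -> fitz_inf <= c.
Proof. by move=> hc; apply: ge_inf; [case: fitz_has_inf | exists x, u]. Qed.

Lemma fitz_inf_approx e : 0 < e -> exists x u, fitz_le (fitz_inf + e) x u.
Proof.
move=> e_gt0; have [c [x [u hc]] c_lt] := inf_adherent e_gt0 fitz_has_inf.
by exists x, u => y v Gyv; apply: le_trans (hc y v Gyv) (ltW c_lt).
Qed.

Lemma fitz_le_closed c (xs us : nat -> X) x u :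
  (forall n, fitz_le (c + n.+1%:R^-1) (xs n) (us n)) ->
  xs @ \oo --> x -> us @ \oo --> u -> fitz_le c x u.
Proof.
move=> hn xsx usu y v Gyv; apply/ler_addgt0Pr => e e_gt0.
have cst (w : X) : (fun _ : nat => w) @ \oo --> w by exact: cvg_cst.
have lim : (fun n => fitz_term y v (xs n) (us n)) @ \oo --> fitz_term y v x u.
  apply: cvgD; first apply: cvgB; first apply: cvgD.
  - exact: (cvg_ip hip xsx (cst v)).
  - exact: (cvg_ip hip (cst y) usu).
  - exact: cvg_cst.
  - by apply: cvgMr_tmp; apply: cvgD; exact: cvg_norm_sqr.
apply: (cvgr_to_le lim); near=> n.
apply: le_trans (hn n y v Gyv) _; rewrite lerD2l ltW //.
by near: n; exact: (near_infty_natSinv_lt (PosNum e_gt0)).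
Unshelve. all: by end_near.
Qed.

Lemma fitz_inf_optimal x0 u0 y v : fitz_le fitz_inf x0 u0 -> G y v ->
  ip x0 u0 + `|x0| ^+ 2 + `|u0| ^+ 2 <= ip y v + ip x0 y + ip u0 v.
Proof.
move=> hmin Gyv; set Q := (`|x0 - y| ^+ 2 + `|u0 - v| ^+ 2) / 2.
set cG := ip y v + (`|y| ^+ 2 + `|v| ^+ 2) / 2.
suff : 0 <= cG - fitz_inf - Q.
  by have := fitz_le_ge hmin; rewrite /Q /cG -!(ipxx hip); ip_normalize; lra.
apply: (affine_ge0_at0 (Q := Q)) => t t_gt0 t_le1.
have t01 : 0 <= t <= 1 by rewrite ltW.
have := fitz_inf_le (fitz_le_convex t01 hmin (fitz_le_graph Gyv)).
by rewrite -(pmulr_rge0 _ t_gt0) /cG /Q; lra.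
Qed.

Lemma fitz_inf_attained_graph x0 u0 : fitz_le fitz_inf x0 u0 -> G x0 (- x0).
Proof.
move=> hmin; have opt := fitz_inf_optimal hmin.
have G_opp : G (- u0) (- x0).
  apply: G_max => a b Gab; have := opt a b Gab; have := sqr_ge0 `|x0 + u0|.
  by rewrite -!(ipxx hip); ip_normalize; lra.
have x0E : x0 = - u0.
  apply: (ip_subr_eq0 hip); apply/eqP; rewrite eq_le (ipxx hip) sqr_ge0 andbT.
  by have := opt _ _ G_opp; rewrite -!(ipxx hip); ip_normalize; lra.
by rewrite {1}x0E.
Qed.

End Fitzpatrick.

Section Minty.
Variables (R : realType) (X : completeNormedModType R) (ip : X -> X -> R).
Hypothesis hip : is_inner_product ip.
Variable G : X -> set X.
Hypothesis G_mono : forall a b a' b', G a b -> G a' b' -> 0 <= ip (a - a') (b - b').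
Hypothesis G_max :
  forall c d, (forall a b, G a b -> 0 <= ip (c - a) (d - b)) -> G c d.

Theorem minty : exists x, G x (- x).
Proof.
have fitz_approx := fitz_inf_approx hip G_mono G_max.
have /choice [z approx] : forall n : nat, exists p : X * X,
    fitz_le ip G (fitz_inf ip G + n.+1%:R^-1) p.1 p.2.
  move=> n; have [|x [u hxu]] := fitz_approx n.+1%:R^-1; first by rewrite invr_gt0.
  by exists (x, u).
pose xs n := (z n).1; pose us n := (z n).2.
have close n k : `|xs n - xs k| ^+ 2 + `|us n - us k| ^+ 2
    <= 4 * (n.+1%:R^-1 + k.+1%:R^-1).
  have half : 0 <= (2^-1 : R) <= 1 by apply/andP; split; lra.
  have := fitz_inf_le hip G_mono G_max (fitz_le_convex hip half (approx n) (approx k)).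
  rewrite /xs /us; set m := fitz_inf _ _; set a := n.+1%:R^-1; set b := k.+1%:R^-1; lra.
have /cvg_ex [x xsx] : cvgn xs.
  apply: (harmonic_cauchy_cvg (c := 4)) => n k.
  by apply: le_trans (close n k); rewrite lerDl sqr_ge0.
have /cvg_ex [u usu] : cvgn us.
  apply: (harmonic_cauchy_cvg (c := 4)) => n k.
  by apply: le_trans (close n k); rewrite lerDr sqr_ge0.
exists x; apply: (fitz_inf_attained_graph hip G_mono G_max (u0 := u)).
exact: (fitz_le_closed hip approx xsx usu).
Qed.

End Minty.

Section Resolvent.
Variables (R : realType) (X : normedModType R) (ip : X -> X -> R).
Hypothesis hip : is_inner_product ip.
Variable r : R.
Hypothesis r_gt_m1 : -1 < r.

Let alpha := (2 * (r + 1))^-1.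

Lemma ler_norm_conicE (a b : X) :
  (`|a - (2 * r + 1) *: b| <= `|a + b|) = (r * `|b| ^+ 2 <= ip a b).
Proof.
have sqrE : `|a - (2 * r + 1) *: b| ^+ 2 - `|a + b| ^+ 2
    = 4 * (r + 1) * (r * `|b| ^+ 2 - ip a b).
  by rewrite -!(ipxx hip); ip_normalize; ring.
rewrite -ler_sqr ?nnegrE // -subr_le0 sqrE pmulr_rle0 ?subr_le0 //; have := r_gt_m1; lra.
Qed.

Lemma conic_combinationE (y z w : X) :
  (y = (1 - alpha) *: z + alpha *: w) <-> (w = y - (2 * r + 1) *: (z - y)).
Proof.
have r1 : r + 1 != 0 by rewrite gt_eqF //; have := r_gt_m1; lra.
by split => ->; vec_ring; rewrite /alpha; field.
Qed.

Lemma comonotone_id_plus_inj (B : X -> set X) x u y v :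
  comonotone ip r B -> B x u -> B y v -> x + u = y + v -> x = y /\ u = v.
Proof.
move=> hB Bxu Byv xuyv.
have xy : x - y = - (u - v).
  by apply/eqP; rewrite -addr_eq0 addrACA -opprD xuyv subrr.
have := hB _ _ _ _ Bxu Byv; rewrite xy (ipNl hip) (ipxx hip) => le_uv.
have : (r + 1) * `|u - v| ^+ 2 <= 0 by lra.
rewrite pmulr_rle0; last by have := r_gt_m1; lra.
rewrite le_eqVlt ltNge sqr_ge0 orbF sqrf_eq0 normr_eq0 subr_eq0 => /eqP uv.
by split => //; apply: (addIr u); rewrite {2}uv.
Qed.

Variable A : X -> set X.
Let D := ran (id_plus A).
Let k := 2 * r + 1.

Lemma comonotone_conic_pairE x u y v :
  (`|x - k *: u - (y - k *: v)| <= `|x + u - (y + v)|)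
  = (r * `|u - v| ^+ 2 <= ip (x - y) (u - v)).
Proof.
rewrite -ler_norm_conicE.
have -> : x - k *: u - (y - k *: v) = x - y - k *: (u - v) by vec_ring; ring.
by have -> : x + u - (y + v) = x - y + (u - v) by vec_ring; ring.
Qed.

Lemma comonotone_conically_nonexpansive :
  comonotone ip r A -> conically_nonexpansive alpha D (resolvent A).
Proof.
move=> hA; split; first by rewrite invr_gt0; have := r_gt_m1; lra.
pose P z := xget 0 (resolvent A z).
have P_res z : D z -> resolvent A z (P z).
  by move=> [p [u Apu pu]]; apply: xgetPex; exists p, u.
have resE z : D z -> resolvent A z = [set P z].
  move=> Dz; apply/seteqP; split => [p [u Apu pu] | _ ->]; last exact: P_res.
  have [u' Au' pu'] := P_res z Dz.
  by have [] := comonotone_id_plus_inj hA Apu Au' (etrans pu (esym pu')).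
exists (fun z => P z - k *: (z - P z)); split; [|split].
- move=> z1 z2 /P_res + /P_res /=.
  move: (P z1) (P z2) => p1 p2 [u1 A1 <-] [u2 A2 <-].
  rewrite [p1 + u1 - _]addrC [p2 + u2 - _]addrC !addKr.
  by rewrite comonotone_conic_pairE; exact: hA.
- by move=> z Dz; rewrite resE //; congr [set _]; apply/conic_combinationE.
- move=> z nDz; apply/seteqP; split => p // [u Apu pu].
  by apply: nDz; exists p, u.
Qed.

Lemma conically_nonexpansive_comonotone :
  conically_nonexpansive alpha D (resolvent A) -> comonotone ip r A.
Proof.
move=> [_ [N [N_ne [TD _]]]].
have D_graph x u : A x u -> D (x + u) by move=> Axu; exists x, u.
have NE x u : A x u -> N (x + u) = x - k *: u.
  move=> Axu; have : resolvent A (x + u) x by exists u.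
  rewrite TD; last exact: D_graph.
  by move=> /conic_combinationE ->; rewrite [x + u]addrC addrK.
move=> x u y v Axu Ayv; rewrite -comonotone_conic_pairE -NE // -NE //.
exact: N_ne (D_graph _ _ Axu) (D_graph _ _ Ayv).
Qed.

Lemma comonotone_iff_conically_nonexpansive :
  comonotone ip r A <-> conically_nonexpansive alpha D (resolvent A).
Proof.
split; [exact: comonotone_conically_nonexpansive | exact: conically_nonexpansive_comonotone].
Qed.

Lemma comonotone_surjective_max :
  comonotone ip r A -> D = setT -> max_comonotone ip r A.
Proof.
move=> hA DT; split => // B hB AB x u Bxu.
have [p [u' Apu' pu']] : D (x + u) by rewrite DT.
by have [-> ->] := comonotone_id_plus_inj hB Bxu (AB _ _ Apu') (esym pu').
Qed.

End Resolvent.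

Lemma max_comonotone_mem (R : realType) (X : normedModType R) (ip : X -> X -> R)
    (r : R) (A : X -> set X) x u :
  is_inner_product ip -> max_comonotone ip r A ->
  (forall y v, A y v -> r * `|u - v| ^+ 2 <= ip (x - y) (u - v)) -> A x u.
Proof.
move=> hip [hA hmax] hxu.
pose B y v := A y v \/ (y = x /\ v = u).
apply: (hmax B) => [||]; [|by left|by right].
have sym y v : A y v -> r * `|v - u| ^+ 2 <= ip (y - x) (v - u).
  by move/hxu; rewrite distrC -(opprB x) -(opprB u) (ipNl hip) (ipNr hip) opprK.
move=> y1 v1 y2 v2 [A1|[-> ->]] [A2|[-> ->]]; [exact: hA|exact: sym|exact: hxu|].
by rewrite !subrr normr0 expr0n mulr0 (ip0l hip).
Qed.

Section Surjectivity.
Variables (R : realType) (X : completeNormedModType R) (ip : X -> X -> R).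
Hypothesis hip : is_inner_product ip.
Variables (r : R) (A : X -> set X).
Hypothesis r_gt_m1 : -1 < r.

Lemma max_comonotone_surjective :
  max_comonotone ip r A -> ran (id_plus A) = setT.
Proof.
move=> Amax; have [hA _] := Amax; apply/seteqP; split => z // _.
have r1 : 0 < 1 + r by have := r_gt_m1; lra.
pose G a b := exists x u, [/\ A x u, a = (1 + r) *: u & b = x - r *: u - z].
have shiftE x u y v : ip ((1 + r) *: u - (1 + r) *: v) (x - r *: u - z - (y - r *: v - z))
    = (1 + r) * (ip (x - y) (u - v) - r * `|u - v| ^+ 2).
  by rewrite -(ipxx hip); ip_normalize; ring.
have G_mono a b a' b' : G a b -> G a' b' -> 0 <= ip (a - a') (b - b').
  move=> [x [u [Axu -> ->]]] [y [v [Ayv -> ->]]].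
  by rewrite shiftE pmulr_rge0 // subr_ge0; exact: hA.
have G_max c d : (forall a b, G a b -> 0 <= ip (c - a) (d - b)) -> G c d.
  move=> hcd; set u := (1 + r)^-1 *: c; set x := d + z + r *: u.
  have cE : c = (1 + r) *: u by rewrite /u scalerA mulfV ?gt_eqF // scale1r.
  have dE : d = x - r *: u - z by rewrite /x !addrK.
  exists x, u; split => //; apply: max_comonotone_mem hip Amax _ => y v Ayv.
  have Gyv : G ((1 + r) *: v) (y - r *: v - z) by exists y, v.
  by have := hcd _ _ Gyv; rewrite cE dE shiftE pmulr_rge0 // subr_ge0.
have [a [x [u [Axu aE bE]]]] := minty hip G_mono G_max.
exists x, u => //; apply/esym.
have -> : z = x - r *: u - - ((1 + r) *: u) by rewrite -aE bE; vec_ring; ring.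
by vec_ring; ring.
Qed.

Lemma max_comonotoneE :
  max_comonotone ip r A <-> comonotone ip r A /\ ran (id_plus A) = setT.
Proof.
split => [Amax | [hA DT]]; last exact: comonotone_surjective_max.
by split; [case: Amax | exact: max_comonotone_surjective].
Qed.

End Surjectivity.

Lemma conically_nonexpansive1 (R : realType) (X : normedModType R)
    (D : set X) (T : X -> set X) :
  conically_nonexpansive 1 D T <-> nonexpansive_op D T.
Proof.
have combE (x y : X) : (1 - 1) *: x + 1 *: y = y by rewrite subrr scale0r add0r scale1r.
split => [[_ [N [N_ne [TD TnD]]]] | [N [N_ne [TD TnD]]]].
  by exists N; split => //; split => [x Dx|//]; rewrite TD ?combE.
by split => //; exists N; split => //; split => [x Dx|//]; rewrite TD ?combE.
Qed.

Lemma averagedE (R : realType) (X : normedModType R) (alpha : R)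
    (D : set X) (T : X -> set X) :
  averaged alpha D T <-> alpha < 1 /\ conically_nonexpansive alpha D T.
Proof.
split => [[/andP[_ ->] conic] | [lt1 [gt0 conic]]] //.
by split; [rewrite gt0 lt1 | split].
Qed.

Unset Implicit Arguments. Set Strict Implicit.

Theorem proposition3p13 (R : realType) (X : completeNormedModType R)
  (inner : X -> X -> R) (hinner : is_inner_product inner)
  (A : X -> set X) (hdom : dom A !=set0) (rho : R) (hrho : -1 < rho) :
  let D := ran (id_plus A) in
  let T := resolvent A in
  let alpha := (2 * (rho + 1))^-1 in
  (comonotone inner rho A <-> conically_nonexpansive alpha D T) /\
      (max_comonotone inner rho A <-> (conically_nonexpansive alpha D T /\ D = setT)) /\
      (comonotone inner (- 2^-1) A <-> nonexpansive_op D T) /\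
      (max_comonotone inner (- 2^-1) A <-> (nonexpansive_op D T /\ D = setT)) /\
      ((comonotone inner rho A /\ - 2^-1 < rho) <-> averaged alpha D T) /\
      ((max_comonotone inner rho A /\ - 2^-1 < rho) <-> (averaged alpha D T /\ D = setT)).
Proof.
move=> D T alpha.
have half_gt_m1 : -1 < - 2^-1 :> R by lra.
have conicE := comonotone_iff_conically_nonexpansive hinner hrho A.
have nonexpE := comonotone_iff_conically_nonexpansive hinner half_gt_m1 A.
have alpha_half : (2 * (- 2^-1 + 1))^-1 = 1 :> R.
  by rewrite (_ : 2 * _ = 1) ?invr1 //; field.
rewrite alpha_half conically_nonexpansive1 in nonexpE.
have alpha_lt1 : alpha < 1 <-> - 2^-1 < rho.
  by rewrite /alpha invf_lt1; [split; lra | lra].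
rewrite !averagedE alpha_lt1 -conicE -nonexpE !max_comonotoneE //.
tauto.
Qed.
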